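(* Let $n>0$ and let $\mathbf{s},\hat{\mathbf{s}}\in\mathbb{R}_{\ge0}^{G_\Delta}$ be such that $\|\mathbf{s}\|_1=n$ and $\|\mathbf{s}-\hat{\mathbf{s}}\|_{\mathrm{EMD}}\le n/2$. Let $\mathbf{a}=\mathbf{s}/\|\mathbf{s}\|_1$ and $\hat{\mathbf{a}}=\hat{\mathbf{s}}/\|\hat{\mathbf{s}}\|_1$. Then $\|\mathbf{a}-\hat{\mathbf{a}}\|_{\mathrm{EMD}}\le 4\|\mathbf{s}-\hat{\mathbf{s}}\|_{\mathrm{EMD}}/n$.
   Context: For $\Delta=2^\ell$, $G_\Delta=\{(i/\Delta,j/\Delta): i,j\in\{0,\dots,\Delta-1\}\}$. For $\mathbf{p},\mathbf{q}\in\mathbb{R}_{\ge0}^{G_\Delta}$ with $\|\mathbf{p}\|_1=\|\mathbf{q}\|_1$, $\mathrm{EMD}(\mathbf{p},\mathbf{q})=\min_\gamma\sum_{x,y\in G_\Delta}\gamma(x,y)\|x-y\|_1$ over $\gamma\in\mathbb{R}_{\ge0}^{G_\Delta\times G_\Delta}$ with marginals $\mathbf{p},\mathbf{q}$. The EMD norm of $\mathbf{w}\in\mathbb{R}^{G_\Delta}$ is $\|\mathbf{w}\|_{\mathrm{EMD}}=\min\{\mathrm{EMD}(\mathbf{p},\mathbf{q})+2\|\mathbf{r}\|_1\}$, the minimum over $\mathbf{p},\mathbf{q}\in\mathbb{R}_{\ge0}^{G_\Delta}$ and $\mathbf{r}\in\mathbb{R}^{G_\Delta}$ with $\mathbf{p}-\mathbf{q}+\mathbf{r}=\mathbf{w}$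 and $\|\mathbf{p}\|_1=\|\mathbf{q}\|_1$. *)

From HB Require Import structures.
From mathcomp Require Import all_boot all_order all_algebra.
From mathcomp Require Import boolp classical_sets reals.
Set Implicit Arguments. Unset Strict Implicit. Unset Printing Implicit Defensive.
Import Order.TTheory GRing.Theory Num.Theory.
Local Open Scope ring_scope.
Local Open Scope classical_set_scope.

(* The grid G_Delta with Delta = 2^l: the point (i,j) stands for (i/Delta, j/Delta). *)
Definition grid (l : nat) : finType := ('I_(2 ^ l) * 'I_(2 ^ l))%type.

Section EMD.
Variables (R : realType) (l : nat).

Definition gdist (x y : grid l) : R :=
  (`|(x.1 : nat)%:R - (y.1 : nat)%:R| + `|(x.2 : nat)%:R - (y.2 : nat)%:R|)
    / (2 ^ l)%:R.

Definition l1norm (w : grid l -> R) : R := \sum_(x : grid l) `|w x|.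

Definition coupling (p q : grid l -> R) (g : grid l -> grid l -> R) : Prop :=
  [/\ forall x y, 0 <= g x y,
      forall x, \sum_(y : grid l) g x y = p x
    & forall y, \sum_(x : grid l) g x y = q y].

Definition transport_cost (g : grid l -> grid l -> R) : R :=
  \sum_(x : grid l) \sum_(y : grid l) g x y * gdist x y.

(* EMD(p,q) = min over couplings of the transport cost (the min is attained,
   so it equals the infimum) *)
Definition EMD (p q : grid l -> R) : R :=
  inf [set c | exists g, coupling p q g /\ c = transport_cost g].

Definition emd_norm (w : grid l -> R) : R :=
  inf [set c | exists (p q r : grid l -> R),
         [/\ (forall x, 0 <= p x), (forall x, 0 <= q x), l1norm p = l1norm q,
             (forall x, p x - q x + r x = w x)
           & c = EMD p q + 2 * l1norm r]].

End EMD.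

From HB Require Import structures.
From mathcomp Require Import all_boot all_order all_algebra.
From mathcomp Require Import boolp classical_sets reals.
From mathcomp Require Import ring lra.
Import Order.TTheory GRing.Theory Num.Theory.
Local Open Scope ring_scope.

(* Write s - ŝ = p - q + r with a transport plan g between p and q of cost t,
   and let L = ||r||_1 and n̂ = ||ŝ||_1.  Dividing by n gives
   a - â = p/n - q/n + r', where r' = r/n + ŝ (1/n - 1/n̂) absorbs the change
   of normalisation.  Since Σ r = n - n̂, we get n̂ |1/n - 1/n̂| <= |n - n̂|/n <= L/n,
   hence ||r'||_1 <= 2L/n and ||a - â||_EMD <= (t + 4L)/n <= 4 (t + 2L)/n.
   Taking the infimum over (p, q, r, g) gives the claim. *)

Lemma ler_mul_norm_subV {F : numFieldType} {n m : F} : 0 < n -> 0 <= m ->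
  m * `|n^-1 - m^-1| <= `|n - m| / n.
Proof.
move=> n_gt0 m_ge0; have [->|m_neq0] := eqVneq m 0.
  by rewrite mul0r divr_ge0 // ltW.
rewrite -[m in m * _]ger0_norm // -normrM.
have -> : m * (n^-1 - m^-1) = - ((n - m) / n) by field; rewrite m_neq0 gt_eqF.
by rewrite normrN normrM normfV (gtr0_norm n_gt0).
Qed.

Section EMDNorm.
Context {R : realType} {l : nat}.
Implicit Types (p q r w : grid l -> R) (g : grid l -> grid l -> R).

Lemma gdist_ge0 (x y : grid l) : 0 <= gdist R x y.
Proof. by rewrite /gdist divr_ge0 // addr_ge0. Qed.

Lemma l1norm_ge0 p : 0 <= l1norm p.
Proof. exact: sumr_ge0. Qed.

Lemma ger0_l1norm p : (forall x, 0 <= p x) -> l1norm p = \sum_x p x.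
Proof. by move=> p_ge0; apply: eq_bigr => x _; rewrite ger0_norm. Qed.

Lemma transport_cost_ge0 g : (forall x y, 0 <= g x y) -> 0 <= transport_cost g.
Proof.
move=> g_ge0; apply: sumr_ge0 => x _; apply: sumr_ge0 => y _.
by rewrite mulr_ge0 ?gdist_ge0.
Qed.

Lemma transport_cost_divr g (k : R) :
  transport_cost (fun x y => g x y / k) = transport_cost g / k.
Proof.
rewrite /transport_cost big_distrl; apply: eq_bigr => x _.
by rewrite big_distrl; apply: eq_bigr => y _; rewrite mulrAC.
Qed.

Section Coupling.
Context {p q : grid l -> R} {g : grid l -> grid l -> R} (pqg : coupling p q g).

Lemma coupling_ge0l x : 0 <= p x.
Proof. by case: pqg => g_ge0 <- _; apply: sumr_ge0. Qed.

Lemma coupling_ge0r y : 0 <= q y.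
Proof. by case: pqg => g_ge0 _ <-; apply: sumr_ge0. Qed.

Lemma coupling_sum : \sum_x p x = \sum_y q y.
Proof.
case: pqg => _ gp gq.
under eq_bigr do rewrite -gp.
by rewrite exchange_big; apply: eq_bigr => y _; exact: gq.
Qed.

Lemma coupling_l1norm : l1norm p = l1norm q.
Proof.
rewrite !ger0_l1norm ?coupling_sum //.
- exact: coupling_ge0r.
- exact: coupling_ge0l.
Qed.

Lemma coupling_divr {k : R} : 0 <= k ->
  coupling (fun x => p x / k) (fun y => q y / k) (fun x y => g x y / k).
Proof.
case: pqg => g_ge0 gp gq k_ge0; split.
- by move=> x y; rewrite divr_ge0.
- by move=> x; rewrite -big_distrl gp.
- by move=> y; rewrite -big_distrl gq.
Qed.

End Coupling.

Lemma coupling_exists p q : (forall x, 0 <= p x) -> (forall y, 0 <= q y) ->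
  \sum_x p x = \sum_y q y -> exists g, coupling p q g.
Proof.
move=> p_ge0 q_ge0 sum_pq; set M := \sum_x p x.
have p_M x : p x * M / M = p x.
  have [M0|M_neq0] := eqVneq M 0; last by rewrite mulfK.
  by rewrite (psumr_eq0P (fun x _ => p_ge0 x) M0) // !mul0r.
have q_M y : M * q y / M = q y.
  have [M0|M_neq0] := eqVneq M 0; last by rewrite [M * _]mulrC mulfK.
  rewrite /M sum_pq in M0.
  by rewrite (psumr_eq0P (fun y _ => q_ge0 y) M0) // mulr0 mul0r.
exists (fun x y => p x * q y / M); split.
- by move=> x y; rewrite divr_ge0 ?mulr_ge0 ?sumr_ge0.
- by move=> x; rewrite -mulr_suml -mulr_sumr -sum_pq p_M.
- by move=> y; rewrite -mulr_suml -mulr_suml q_M.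
Qed.

Lemma EMD_ge0 p q : 0 <= EMD p q.
Proof.
rewrite /EMD; set C := (X in inf X).
have [->|/set0P C_neq0] := eqVneq C set0; first by rewrite inf0.
apply: lb_le_inf C_neq0 _ => _ [g [[g_ge0 _ _] ->]].
exact: transport_cost_ge0.
Qed.

Lemma EMD_le_cost p q g : coupling p q g -> EMD p q <= transport_cost g.
Proof.
move=> pqg; apply: ge_inf; last by exists g.
by exists 0 => _ [h [[h_ge0 _ _] ->]]; exact: transport_cost_ge0.
Qed.

Lemma emd_norm_le_coupling {w p q r g} : coupling p q g ->
  (forall x, p x - q x + r x = w x) ->
  emd_norm w <= transport_cost g + 2 * l1norm r.
Proof.
move=> pqg pqr; apply: (@le_trans _ _ (EMD p q + 2 * l1norm r)).
  apply: ge_inf.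
    exists 0 => _ [? [? [? [_ _ _ _ ->]]]].
    by rewrite addr_ge0 ?mulr_ge0 ?EMD_ge0 ?l1norm_ge0.
  exists p, q, r; split=> //.
  - exact: coupling_ge0l pqg.
  - exact: coupling_ge0r pqg.
  - exact: coupling_l1norm pqg.
by rewrite lerD2r EMD_le_cost.
Qed.

Lemma emd_norm_ge_coupling w (b : R) :
  (forall p q r g, coupling p q g -> (forall x, p x - q x + r x = w x) ->
     b <= transport_cost g + 2 * l1norm r) ->
  b <= emd_norm w.
Proof.
move=> b_le; apply: lb_le_inf.
  exists (EMD (fun _ : grid l => 0) (fun=> 0) + 2 * l1norm w).
  exists (fun=> 0), (fun=> 0), w.
  by split=> // x; rewrite subrr add0r.
move=> _ [p [q [r [p_ge0 q_ge0 pq_eq pqr ->]]]].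
rewrite -lerBlDr; apply: lb_le_inf => [|_ [g [pqg ->]]].
  have [|g pqg] := coupling_exists p q p_ge0 q_ge0.
    by rewrite -!ger0_l1norm.
  by exists (transport_cost g), g.
by rewrite lerBlDr; apply: b_le pqg pqr.
Qed.

Lemma l1norm_subr_le_residual {s sh p q r g} :
  (forall x, 0 <= s x) -> (forall x, 0 <= sh x) -> coupling p q g ->
  (forall x, p x - q x + r x = s x - sh x) ->
  `|l1norm s - l1norm sh| <= l1norm r.
Proof.
move=> s_ge0 sh_ge0 pqg pqr.
have sum_r : \sum_x r x = l1norm s - l1norm sh.
  rewrite !ger0_l1norm // -sumrB -(eq_bigr _ (fun x _ => pqr x)).
  by rewrite !big_split /= sumrN (coupling_sum pqg) subrr add0r.
by rewrite -sum_r; apply: ler_norm_sum.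
Qed.

Lemma l1norm_renormalized_residual_le sh r (n : R) :
  0 < n -> (forall x, 0 <= sh x) -> `|n - l1norm sh| <= l1norm r ->
  l1norm (fun x => r x / n + sh x * (n^-1 - (l1norm sh)^-1))
    <= 2 * l1norm r / n.
Proof.
move=> n_gt0 sh_ge0 mass_le; set c := n^-1 - _.
have split_le : l1norm (fun x => r x / n + sh x * c)
    <= l1norm r / n + l1norm sh * `|c|.
  rewrite [l1norm sh]ger0_l1norm // /l1norm !mulr_suml -big_split /=.
  apply: ler_sum => x _; apply: le_trans (ler_normD _ _) _.
  by rewrite !normrM normfV (gtr0_norm n_gt0) (ger0_norm (sh_ge0 x)).
have shift_le : l1norm sh * `|c| <= l1norm r / n.
  apply: le_trans (ler_mul_norm_subV n_gt0 (l1norm_ge0 sh)) _.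
  by rewrite ler_pM2r ?invr_gt0.
by apply: le_trans split_le _; lra.
Qed.

Lemma emd_norm_normalized_le {s sh p q r g} :
  0 < l1norm s -> (forall x, 0 <= s x) -> (forall x, 0 <= sh x) ->
  coupling p q g -> (forall x, p x - q x + r x = s x - sh x) ->
  emd_norm (fun x => s x / l1norm s - sh x / l1norm sh)
    <= (transport_cost g + 4 * l1norm r) / l1norm s.
Proof.
move=> n_gt0 s_ge0 sh_ge0 pqg pqr; set n := l1norm s; set nh := l1norm sh.
set r' := fun x => r x / n + sh x * (n^-1 - nh^-1).
have decomp x : p x / n - q x / n + r' x = s x / n - sh x / nh.
  have -> : r' x = (s x - sh x - p x + q x) / n + sh x * (n^-1 - nh^-1).
    by rewrite /r' -(pqr x); ring.
  ring.
have r'_le : l1norm r' <= 2 * l1norm r / n.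
  apply: l1norm_renormalized_residual_le => //.
  exact: l1norm_subr_le_residual pqg pqr.
apply: le_trans (emd_norm_le_coupling (coupling_divr pqg (ltW n_gt0)) decomp) _.
rewrite transport_cost_divr mulrDl; lra.
Qed.

End EMDNorm.

Theorem lemma1 (R : realType) (l : nat) (n : R) (s sh : grid l -> R) :
  0 < n ->
  (forall x, 0 <= s x) -> (forall x, 0 <= sh x) ->
  l1norm s = n ->
  emd_norm (fun x => s x - sh x) <= n / 2 ->
  emd_norm (fun x => s x / l1norm s - sh x / l1norm sh)
    <= 4 * emd_norm (fun x => s x - sh x) / n.
Proof.
move=> n_gt0 s_ge0 sh_ge0 s_n _; subst n.
rewrite ler_pdivlMr //; set X := emd_norm _.
suff : X * l1norm s / 4 <= emd_norm (fun x => s x - sh x) by lra.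
apply: emd_norm_ge_coupling => p q r g pqg pqr.
have := emd_norm_normalized_le n_gt0 s_ge0 sh_ge0 pqg pqr.
rewrite -/X ler_pdivlMr // => X_le.
have t_ge0 : 0 <= transport_cost g.
  by case: pqg => g_ge0 _ _; exact: transport_cost_ge0.
have := l1norm_ge0 r; lra.
Qed.
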